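(* Let $D$ be a link diagram and $\Gamma$ its associated fat-vertex graph. Then $\omega(\Gamma)\geq\omega(D)$.
   Context: Wirtinger number of a diagram: view $D$ (with $n$ crossings) as a union of $n$ strands (arcs between undercrossings); two strands are adjacent if they are the two under-strands at some crossing. A partial coloring is a nonempty subset $A$ of the set $S(D)$ of strands. A coloring move $A_1\to A_2$ is allowed if $A_2\setminus A_1=\{s_j\}$ is a single strand and $s_j$ is adjacent to some $s_i\in A_1$ at a crossing whose over-strand $s_k$ lies in $A_1$. $D$ is $k$-colorable if there is a $k$-element set $A_0\subset S(D)$ and a sequence of $n-k$ coloring moves $A_0\to\cdots\to A_{n-k}=S(D)$; $\omega(D)$ is the least such $k$. Fat-vertex graph: from $D$ and a checkerboard spanning surface $F$ (a union of disks and twisted bands), form the planar graph whose vertices are the disks of $F$, drawn as disjoint closed disks (''fat vertices''), and whose edges are the cores of the bands. A segment of $\Gamma$ is either an edge or a connected arc of $\partial v\setminus\{\text{endpoints of edges}\}$ for a fat vertex $v$; let $S(\Gamma)$ be the set of segments ($m$ elements) and $e(\Gamma)$ the set of edges. For $A_1\subset A_2\subset S(\Gamma)$ with $A_2\setminus A_1=\{s\}$, a coloring move $A_1\to A_2$ is allowed if either (1) $s$ is an edge and both boundary segments adjacent to $s$ at one of its (same) vertex are in $A_1$, or (2) $s$ is an arc in the boundary of a fat vertex and is incident to an edge in $A_1$. $\Gamma$ is $k$-colorable if there is a $k$-element set $A_0\subset S(\Gamma)\setminus e(\Gamma)$ and a sequence of $m-k$ coloring moves ending at $S(\Gamma)$;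 $\omega(\Gamma)$ is the least such $k$. *)

From mathcomp Require Import all_boot fingroup perm.
Set Implicit Arguments. Unset Strict Implicit. Unset Printing Implicit Defensive.

(* Link diagrams as combinatorial maps on a finite set H of darts
   (half-edges of the projection):
   - [rot] : counterclockwise rotation of the four darts around a crossing;
   - [edg] : fixed-point-free involution pairing the two halves of an edge
             of the projection (an arc between two consecutive crossings);
   - [over d] : the dart d belongs to the over-strand at its crossing.
   Dart d represents the corner between d and [rot d]; faces of the
   projection are the orbits of [fun d => edg (rot d)] acting on corners. *)
Record diagram (H : finType) := Diagram {
  rot : {perm H};
  edg : {perm H};
  over : H -> bool }.

Definition glink (H : finType) (D : diagram H) : rel H :=
  [rel x y | (y == rot D x) || (y == edg D x)].

Definition face_step (H : finType) (D : diagram H) : H -> H :=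
  fun d => edg D (rot D d).

(* D is a link diagram: a 4-valent map of genus 0 (Euler's formula
   V - E + F = 2 C on every component) with over/under information at
   every crossing (opposite darts share over/under status, adjacent ones
   do not). *)
Definition is_link_diagram (H : finType) (D : diagram H) : Prop :=
  [/\ forall d, #|fconnect (rot D) d| = 4,
      forall d, edg D (edg D d) = d,
      forall d, edg D d != d,
      forall d, over D (rot D d) = ~~ over D d &
      fcard (rot D) H + fcard (face_step D) H
        = fcard (edg D) H + 2 * n_comp (glink D) H ].

Inductive reach (T : Type) (mv : T -> T -> Prop) : T -> T -> Prop :=
  | reach_refl x : reach mv x x
  | reach_step x y z : mv x y -> reach mv y z -> reach mv x z.

(* Two darts lie on the same strand if they are the two halves of an edge
   of the projection, or if they are opposite darts of the over-strand at a
   crossing (strands pass over crossings and are cut at undercrossings). *)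
Definition strand_link (H : finType) (D : diagram H) : rel H :=
  [rel x y | [|| y == edg D x, x == edg D y,
                 over D x && (y == rot D (rot D x)) |
                 over D y && (x == rot D (rot D y))]].

Definition strand (H : finType) (D : diagram H) (d : H) : {set H} :=
  [set y | connect (strand_link D) d y].

Definition strands (H : finType) (D : diagram H) : {set {set H}} :=
  [set strand D d | d in H].

(* Coloring move A1 -> A2 for D: at a crossing, with under darts u and
   rot^2 u and over-strand through rot u, the over-strand and the
   under-strand through u are colored and A2 adds the other under-strand. *)
Definition wmove (H : finType) (D : diagram H) (A1 A2 : {set {set H}}) : Prop :=
  exists u : H,
    [/\ ~~ over D u,
        strand D (rot D u) \in A1,
        strand D u \in A1,
        strand D (rot D (rot D u)) \notin A1 &
        A2 = strand D (rot D (rot D u)) |: A1].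

Definition D_colorable (H : finType) (D : diagram H) (k : nat) : Prop :=
  exists A0 : {set {set H}},
    [/\ A0 \subset strands D, A0 != set0, #|A0| = k &
        reach (wmove D) A0 (strands D)].

Definition is_wirtinger_number (H : finType) (D : diagram H) (k : nat) : Prop :=
  D_colorable D k /\ forall j, D_colorable D j -> k <= j.

(* [sh d] : the corner between d and rot d lies in the shaded region
   (i.e. in a disk of the checkerboard surface F). *)
Definition is_checkerboard (H : finType) (D : diagram H) (sh : H -> bool) : Prop :=
  (forall d, sh (rot D d) = ~~ sh d) /\
  (forall d, sh (edg D (rot D d)) = sh d).

(* Segments of the fat-vertex graph Gamma:
   inl (porbit edg d) = the arc of the boundary of the fat vertex (shaded
                        region) running along the projection edge of d;
   inr (porbit rot d) = the edge of Gamma (core of the band) at the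
                        crossing of d. *)
Definition segment (H : finType) := ({set H} + {set H})%type.

Definition arc_seg (H : finType) (D : diagram H) (d : H) : segment H :=
  inl (porbit (edg D) d).
Definition band_seg (H : finType) (D : diagram H) (d : H) : segment H :=
  inr (porbit (rot D) d).

Definition segments (H : finType) (D : diagram H) : {set segment H} :=
  [set arc_seg D d | d in H] :|: [set band_seg D d | d in H].
Definition gedges (H : finType) (D : diagram H) : {set segment H} :=
  [set band_seg D d | d in H].

(* Coloring moves for Gamma:
   (1) color the edge at the crossing of d if, at one of its ends (a shaded
       corner d), both adjacent boundary arcs (along the edges of d and of
       rot d) are colored;
   (2) color the boundary arc along the edge of d if the edge of Gamma at
       one of its endpoints (the crossing of d, d ranging over both halves)
       is colored. *)
Definition gmove (H : finType) (D : diagram H) (sh : H -> bool)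
    (A1 A2 : {set segment H}) : Prop :=
  (exists d : H,
     [/\ sh d, arc_seg D d \in A1, arc_seg D (rot D d) \in A1,
         band_seg D d \notin A1 & A2 = band_seg D d |: A1])
  \/
  (exists d : H,
     [/\ band_seg D d \in A1, arc_seg D d \notin A1 &
         A2 = arc_seg D d |: A1]).

Definition G_colorable (H : finType) (D : diagram H) (sh : H -> bool)
    (k : nat) : Prop :=
  exists A0 : {set segment H},
    [/\ A0 \subset segments D :\: gedges D, #|A0| = k &
        reach (gmove D sh) A0 (segments D)].

Definition is_fat_wirtinger_number (H : finType) (D : diagram H)
    (sh : H -> bool) (k : nat) : Prop :=
  G_colorable D sh k /\ forall j, G_colorable D sh j -> k <= j.

(* Send a set of colored segments of the fat-vertex graph to the set of
   strands through the darts it touches.  An arc colored by move (2) lies on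
   the same strand as the end of the edge it meets, so it colors no new
   strand.  An edge colored by move (1) colors the four darts of its
   crossing; the two arcs that allowed the move already color the
   over-strand and one under-strand there, so at most the other under-strand
   is new, and it is obtained by one Wirtinger move.  Hence every coloring
   sequence of the graph projects onto one of the diagram, and an initial
   coloring by k arcs touches at most k strands. *)
From Pilot Require Import Defs.
From mathcomp Require Import all_boot fingroup perm.
(* Re-import so that [over] is the diagram field, not ssreflect's [over]. *)
Import Defs.
Set Implicit Arguments. Unset Strict Implicit. Unset Printing Implicit Defensive.

Section Reach.
Variables (T : Type) (mv : T -> T -> Prop).

Lemma reach_trans x y z : reach mv x y -> reach mv y z -> reach mv x z.
Proof. by elim=> // a b c ab _ IH /IH; apply: reach_step. Qed.

Lemma reach_stuck x y : (forall z, ~ mv x z) -> reach mv x y -> y = x.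
Proof. by move=> stuck r; case: r stuck => // a b c ab _ /(_ b). Qed.

Lemma reach_map (S : Type) (mvS : S -> S -> Prop) (f : S -> T) :
  (forall x y, mvS x y -> reach mv (f x) (f y)) ->
  forall x y, reach mvS x y -> reach mv (f x) (f y).
Proof.
move=> sim x y; elim=> [a|a b c /sim ab _]; first exact: reach_refl.
exact: reach_trans.
Qed.

End Reach.

Section Strands.
Variables (H : finType) (D : diagram H).
Implicit Types (x y d u : H) (A : {set segment H}) (B : {set {set H}}).

Lemma strand_linkC x y : strand_link D x y = strand_link D y x.
Proof.
rewrite /strand_link /= orbA (orbC (y == _)) -orbA.
by rewrite (orbC (over D x && _)).
Qed.

Lemma strand_link_eq x y : strand_link D x y -> strand D x = strand D y.
Proof.
move=> xy; apply/setP => z; rewrite !inE.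
exact: (same_connect1 (sym_connect_sym strand_linkC) xy).
Qed.

Lemma strand_edg x : strand D (edg D x) = strand D x.
Proof. by symmetry; apply: strand_link_eq; rewrite /strand_link /= eqxx. Qed.

Lemma strand_over x : over D x -> strand D (rot D (rot D x)) = strand D x.
Proof.
by move=> ox; symmetry; apply: strand_link_eq; rewrite /strand_link /= ox eqxx !orbT.
Qed.

Lemma strand_porbit_edg x y : y \in porbit (edg D) x -> strand D y = strand D x.
Proof.
case/porbitP=> i ->; elim: i => [|i IH]; first by rewrite expg0 perm1.
by rewrite expgSr permM strand_edg.
Qed.

Definition colored_darts A : {set H} :=
  [set x | (arc_seg D x \in A) || (band_seg D x \in A)].

Definition colored_strands A : {set {set H}} := strand D @: colored_darts A.

Lemma colored_darts_arcU d A :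
  colored_darts (arc_seg D d |: A) = porbit (edg D) d :|: colored_darts A.
Proof.
apply/setP => x; rewrite !inE /arc_seg -orbA; congr (_ || _).
exact: eq_porbit_mem.
Qed.

Lemma colored_darts_bandU d A :
  colored_darts (band_seg D d |: A) = porbit (rot D) d :|: colored_darts A.
Proof.
apply/setP => x; rewrite !inE /band_seg orbCA; congr (_ || _).
exact: eq_porbit_mem.
Qed.

Lemma colored_strands_arcU d A :
  band_seg D d \in A -> colored_strands (arc_seg D d |: A) = colored_strands A.
Proof.
move=> Ad; rewrite /colored_strands colored_darts_arcU imsetU.
apply/setUidPr/subsetP => _ /imsetP[x /strand_porbit_edg -> ->].
by apply: imset_f; rewrite inE Ad orbT.
Qed.

Lemma colored_strands_bandU d A :
  colored_strands (band_seg D d |: A) =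
  strand D @: porbit (rot D) d :|: colored_strands A.
Proof. by rewrite /colored_strands colored_darts_bandU imsetU. Qed.

Lemma colored_strands_segments : colored_strands (segments D) = strands D.
Proof.
apply/eqP; rewrite eqEsubset.
by apply/andP; split; apply/subsetP => _ /imsetP[x _ ->];
  apply: imset_f; rewrite // !inE imset_f.
Qed.

Definition arc_strand (s : segment H) : {set H} :=
  if s is inl e then \bigcup_(x in e) strand D x else set0.

Lemma arc_strand_seg x : arc_strand (arc_seg D x) = strand D x.
Proof.
apply/eqP; rewrite eqEsubset (bigcup_sup _ (porbit_id _ x)) andbT.
by apply/bigcupsP => y /strand_porbit_edg ->.
Qed.

Lemma card_colored_strands A :
  (forall x, band_seg D x \notin A) -> #|colored_strands A| <= #|A|.
Proof.
move=> noband; apply: leq_trans (leq_imset_card arc_strand A).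
apply/subset_leq_card/subsetP => _ /imsetP[x + ->].
rewrite inE (negbTE (noband x)) orbF -arc_strand_seg; exact: imset_f.
Qed.

Lemma reach_wmove_set0 B : reach (wmove D) set0 B -> B = set0.
Proof. by apply: reach_stuck => A [u [_ _]]; rewrite in_set0. Qed.

Hypothesis rot_order4 : forall d, #|fconnect (rot D) d| = 4.
Hypothesis over_rot : forall d, over D (rot D d) = ~~ over D d.

Lemma rot4 d : rot D (rot D (rot D (rot D d))) = d.
Proof.
have := iter_order (@perm_inj _ (rot D)) d.
by rewrite /fingraph.order rot_order4.
Qed.

Lemma porbit_rot d :
  porbit (rot D) d = [set d; rot D d; rot D (rot D d); rot D (rot D (rot D d))].
Proof.
apply/eqP; rewrite eqEsubset; apply/andP; split; last first.
  have rot_porbit y : y \in porbit (rot D) d -> rot D y \in porbit (rot D) d.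
    by case/porbitP=> i ->; rewrite -permM -expgSr mem_porbit.
  by rewrite !subUset !sub1set !rot_porbit ?porbit_id.
apply/subsetP => _ /porbitP[i ->].
elim: i => [|i]; first by rewrite expg0 perm1 !inE eqxx.
by rewrite expgSr permM !inE -!orbA => /or4P[] /eqP->; rewrite ?rot4 eqxx ?orbT.
Qed.

Lemma reach_wmove_under B u :
  ~~ over D u -> strand D (rot D u) \in B -> strand D u \in B ->
  reach (wmove D) B (strand D @: porbit (rot D) u :|: B).
Proof.
move=> uu Bru Bu.
have -> : strand D @: porbit (rot D) u :|: B = strand D (rot D (rot D u)) |: B.
  apply/setP => S; rewrite porbit_rot !imsetU !imset_set1 !inE.
  rewrite (strand_over (x := rot D u)) ?over_rot //.
  have [->|_] := eqVneq S (strand D u); first by rewrite Bu !orbT.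
  by have [->|_] := eqVneq S (strand D (rot D u)); rewrite ?Bru ?orbT ?orbF.
have [Brru|Brru] := boolP (strand D (rot D (rot D u)) \in B).
  by rewrite (setUidPr _) ?sub1set //; apply: reach_refl.
by apply: reach_step (reach_refl _ _); exists u.
Qed.

Lemma reach_wmove_crossing B d :
  strand D d \in B -> strand D (rot D d) \in B ->
  reach (wmove D) B (strand D @: porbit (rot D) d :|: B).
Proof.
move=> Bd Brd; have [od|ud] := boolP (over D d); last exact: reach_wmove_under.
rewrite -(porbit_perm _ 1) expg1.
by apply: reach_wmove_under; rewrite ?over_rot ?od ?strand_over.
Qed.

Variable sh : H -> bool.

Lemma reach_colored_strands A1 A2 :
  reach (gmove D sh) A1 A2 ->
  reach (wmove D) (colored_strands A1) (colored_strands A2).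
Proof.
apply: reach_map => {}A1 {}A2 [[d [_ A1d A1rd _ ->]]|[d [A1d _ ->]]].
- rewrite colored_strands_bandU; apply: reach_wmove_crossing;
    by apply: imset_f; rewrite inE ?A1d ?A1rd.
- by rewrite colored_strands_arcU //; apply: reach_refl.
Qed.

End Strands.

Theorem lemma4p4 (H : finType) (D : diagram H) (sh : H -> bool)
  (kD kG : nat) :
  is_link_diagram D ->
  is_checkerboard D sh ->
  is_wirtinger_number D kD ->
  is_fat_wirtinger_number D sh kG ->
  kD <= kG.
Proof.
move=> [rot_order4 _ _ over_rot _] _ [[B0 [B0sub B0n0 _ _]] minD].
move=> [[A0 [A0sub <- reachA0]] _].
have noband x : band_seg D x \notin A0.
  by apply/negP => /(subsetP A0sub); rewrite !inE imset_f ?andbF.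
have reachB : reach (wmove D) (colored_strands D A0) (strands D).
  by rewrite -colored_strands_segments; exact: reach_colored_strands reachA0.
apply: leq_trans (card_colored_strands noband); apply: minD.
exists (colored_strands D A0); split => //.
- by apply/subsetP => _ /imsetP[x _ ->]; apply: imset_f.
- apply: contraNneq B0n0 => no_colored; rewrite no_colored in reachB.
  by rewrite -subset0 -(reach_wmove_set0 reachB).
Qed.
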